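(* Let $G$ be a simple directed graph and $\sigma$ a set of nodes with a simply-added split $\sigma=\tau\,\dot\cup\,\omega$ ($\omega$ simply-added onto $\tau$), where $\tau$ has uniform in-degree. If $\tau$ is not a stable motif, then $\sigma$ is not a stable motif (for a CTLN $W(G,\varepsilon,\delta)$ with legal parameters).
   Context: $\sigma=\tau\,\dot\cup\,\omega$ with $\tau,\omega$ nonempty and disjoint is a simply-added split ($\omega$ simply-added onto $\tau$) if for each $i\in\omega$, either $i\to j$ for every $j\in\tau$ or $i\to j$ for no $j\in\tau$ (no constraints on other edges). $\tau$ has uniform in-degree if all nodes of $G|_\tau$ have the same in-degree. Legal parameters: $\delta>0$, $0<\varepsilon<\frac{\delta}{\delta+1}$. $W$ has $W_{ii}=0$, $W_{ij}=-1+\varepsilon$ if $j\to i$, $W_{ij}=-1-\delta$ if $i\ne j$, $j\not\to i$; dynamics $\dot x_i=-x_i+[\sum_jW_{ij}x_j+\theta]_+$, $\theta>0$; nondegenerate. $W_\rho$ is the principal submatrix on $\rho$. $\rho$ is a stable motif if $\theta(I-W_\rho)^{-1}1_\rho$ has all entries positive and all eigenvalues of $I-W_\rho$ have positive real part. *)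

From HB Require Import structures.
From mathcomp Require Import all_boot all_order all_algebra.
From mathcomp Require Import reals complex.
Set Implicit Arguments. Unset Strict Implicit. Unset Printing Implicit Defensive.
Import Order.TTheory GRing.Theory Num.Theory.
Local Open Scope ring_scope.

(* A directed graph on nodes 'I_n: G j i means the edge j -> i. *)
Definition simple_digraph (n : nat) (G : rel 'I_n) : Prop :=
  forall i, ~~ G i i.

Definition simply_added_split (n : nat) (G : rel 'I_n)
    (sigma tau omega : {set 'I_n}) : Prop :=
  [/\ sigma = tau :|: omega, [disjoint tau & omega], tau != set0, omega != set0 &
      forall i, i \in omega ->
        (forall j, j \in tau -> G i j) \/ (forall j, j \in tau -> ~~ G i j)].

Definition indeg_in (n : nat) (G : rel 'I_n) (tau : {set 'I_n}) (i : 'I_n) : nat :=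
  #|[set j in tau | G j i]|.

Definition uniform_indegree (n : nat) (G : rel 'I_n) (tau : {set 'I_n}) : Prop :=
  exists d : nat, forall i, i \in tau -> indeg_in G tau i = d.

Definition legal_params (R : realType) (eps delta : R) : Prop :=
  0 < delta /\ 0 < eps /\ eps < delta / (delta + 1).

Definition ctln_W (R : realType) (n : nat) (G : rel 'I_n) (eps delta : R) : 'M[R]_n :=
  \matrix_(i, j) (if i == j then 0
                  else if G j i then -1 + eps else -1 - delta).

Definition principal_sub (R : realType) (n : nat) (W : 'M[R]_n) (rho : {set 'I_n})
  : 'M[R]_#|rho| :=
  \matrix_(a, b) W (enum_val a) (enum_val b).

Definition IminusW (R : realType) (n : nat) (W : 'M[R]_n) (rho : {set 'I_n})
  : 'M[R]_#|rho| := 1%:M - principal_sub W rho.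

Definition ctln_nondegenerate (R : realType) (n : nat) (W : 'M[R]_n) (theta : R) : Prop :=
  forall sigma : {set 'I_n},
    \det (IminusW W sigma) != 0 /\
    forall k : 'I_#|sigma|,
      \det (\matrix_(a, b) (if b == k then theta else IminusW W sigma a b)) != 0.


Definition stable_motif (R : realType) (n : nat) (W : 'M[R]_n) (theta : R)
    (rho : {set 'I_n}) : Prop :=
  (forall a : 'I_#|rho|,
      0 < (theta *: (invmx (IminusW W rho) *m (const_mx 1 : 'cV[R]_#|rho|))) a (ord0 : 'I_1)) /\
  (forall lam : R[i],
      eigenvalue (map_mx (fun x : R => Complex x 0) (IminusW W rho)) lam ->
      0 < complex.Re lam).

From HB Require Import structures.
From mathcomp Require Import all_boot all_order all_algebra.
From mathcomp Require Import reals complex.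
From mathcomp Require Import ring lra.
Set Implicit Arguments. Unset Strict Implicit. Unset Printing Implicit Defensive.
Import Order.TTheory GRing.Theory Num.Theory.
Local Open Scope ring_scope.

(* Uniform in-degree makes all row sums of I - W_tau equal to one r > 0 (the
   entries are nonnegative and the diagonal is 1), so 1_tau is a right
   eigenvector for r: the fixed point (theta / r) 1_tau is positive, and tau can
   only be unstable through an eigenvalue lam <> r with Re lam <= 0.  A left
   eigenvector for such a lam is orthogonal to 1_tau, and every omega-column of
   I - W_sigma is constant on tau because omega is simply added; hence extending
   that eigenvector by zero gives a left eigenvector of I - W_sigma for lam. *)

Section RestrictedKernel.
Variables (F : fieldType) (n : nat) (f : 'I_n -> 'I_n -> F).

Definition restr_mx (rho : {set 'I_n}) : 'M[F]_#|rho| :=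
  \matrix_(a, b) f (enum_val a) (enum_val b).

(* Left eigenvectors are indexed by 'I_n rather than 'I_#|rho|, so that those of
   nested index sets can be compared directly. *)
Definition left_eigenfun (rho : {set 'I_n}) (lam : F) (w : 'I_n -> F) : Prop :=
  (exists2 x, x \in rho & w x != 0) /\
  {in rho, forall y, \sum_(x in rho) w x * f x y = lam * w y}.

Lemma eigenvalue_restr_mxP rho lam :
  eigenvalue (restr_mx rho) lam <-> exists w, left_eigenfun rho lam w.
Proof.
split=> [/eigenvalueP [u uK u_neq0] | [w [[x0 x0rho wx0] wE]]].
  pose w x := \sum_(a | enum_val a == x) u 0 a.
  have wK a : w (enum_val a) = u 0 a.
    by rewrite /w (big_pred1 a) // => b; rewrite /= (inj_eq enum_val_inj).
  exists w; split.
    have [a ua] : exists a, u 0 a != 0.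
      apply/existsP; apply: contraNT u_neq0 => /existsPn u0.
      by apply/eqP/rowP => a; rewrite mxE; apply/eqP/negbNE/u0.
    by exists (enum_val a); rewrite ?enum_valP ?wK.
  move=> y yrho; rewrite -(enum_rankK_in yrho yrho) wK big_enum_val.
  have := congr1 (fun v : 'rV_#|rho| => v 0 (enum_rank_in yrho y)) uK.
  by rewrite !mxE => <-; apply: eq_bigr => a _; rewrite wK mxE.
apply/eigenvalueP; exists (\row_b w (enum_val b)).
  apply/rowP => b; rewrite !mxE -wE ?enum_valP // [RHS]big_enum_val.
  by apply: eq_bigr => a _; rewrite !mxE.
apply: contraNneq wx0 => /rowP /(_ (enum_rank_in x0rho x0)).
by rewrite !mxE enum_rankK_in // => ->.
Qed.

Lemma restr_mx_const_rowsum (rho : {set 'I_n}) r :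
  {in rho, forall x, \sum_(y in rho) f x y = r} ->
  restr_mx rho *m const_mx 1 = const_mx r :> 'cV_#|rho|.
Proof.
move=> rowE; apply/colP => a; rewrite !mxE -(rowE _ (enum_valP a)) [RHS]big_enum_val.
by apply: eq_bigr => b _; rewrite !mxE mulr1.
Qed.

Lemma left_eigenfun_sum_eq0 (rho : {set 'I_n}) r lam w :
  {in rho, forall x, \sum_(y in rho) f x y = r} -> lam != r ->
  left_eigenfun rho lam w -> \sum_(x in rho) w x = 0.
Proof.
move=> rowE lam_neq_r [_ wE].
have : \sum_(y in rho) \sum_(x in rho) w x * f x y = lam * \sum_(x in rho) w x.
  by rewrite mulr_sumr; apply: eq_bigr => y /wE.
rewrite exchange_big /=.
under eq_bigr => x xrho do rewrite -mulr_sumr rowE //.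
rewrite -mulr_suml mulrC => /eqP; rewrite -subr_eq0 -mulrBl mulf_eq0 subr_eq0.
by rewrite eq_sym (negbTE lam_neq_r) => /eqP.
Qed.

Lemma left_eigenfun_extend (tau sigma : {set 'I_n}) lam w :
  tau \subset sigma ->
  {in sigma :\: tau, forall y, exists c, {in tau, forall x, f x y = c}} ->
  \sum_(x in tau) w x = 0 -> left_eigenfun tau lam w ->
  left_eigenfun sigma lam (fun x => if x \in tau then w x else 0).
Proof.
move=> /subsetP tau_sigma const_col sum_w0 [[x0 x0tau wx0] wE].
split; first by exists x0; rewrite ?tau_sigma ?x0tau.
move=> y ysigma.
have -> : \sum_(x in sigma) (if x \in tau then w x else 0) * f x y =
          \sum_(x in tau) w x * f x y.
  under eq_bigr do rewrite (fun_if (fun a => a * f _ y)) mul0r.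
  by rewrite -big_mkcondr; apply: eq_bigl => x; rewrite andb_idl // => /tau_sigma.
have [ytau | yntau] := boolP (y \in tau); first exact: wE.
have [c colE] : exists c, {in tau, forall x, f x y = c}.
  by apply: const_col; rewrite in_setD yntau.
by rewrite (eq_bigr _ (fun x xtau => congr1 _ (colE x xtau))) -mulr_suml sum_w0 mul0r mulr0.
Qed.

Lemma eigenvalue_restr_mx_extend (tau sigma : {set 'I_n}) r lam :
  tau \subset sigma ->
  {in tau, forall x, \sum_(y in tau) f x y = r} ->
  {in sigma :\: tau, forall y, exists c, {in tau, forall x, f x y = c}} ->
  lam != r -> eigenvalue (restr_mx tau) lam -> eigenvalue (restr_mx sigma) lam.
Proof.
move=> tau_sigma rowE const_col lam_neq_r /eigenvalue_restr_mxP [w wE].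
have sum_w0 := left_eigenfun_sum_eq0 rowE lam_neq_r wE.
by apply/eigenvalue_restr_mxP; eexists; apply: left_eigenfun_extend wE.
Qed.

End RestrictedKernel.

Lemma map_restr_mx (F K : fieldType) (g : F -> K) n (f : 'I_n -> 'I_n -> F) rho :
  map_mx g (restr_mx f rho) = restr_mx (fun x y => g (f x y)) rho.
Proof. by apply/matrixP => a b; rewrite !mxE. Qed.

Lemma invmx_const_rowsum (F : fieldType) m (A : 'M[F]_m) r :
  A \in unitmx -> r != 0 -> A *m const_mx 1 = const_mx r :> 'cV_m ->
  invmx A *m const_mx 1 = const_mx r^-1 :> 'cV_m.
Proof.
move=> A_unit r_neq0 rowA.
have Ar : A *m const_mx r^-1 = const_mx 1 :> 'cV_m.
  have -> : const_mx r^-1 = r^-1 *: (const_mx 1 : 'cV[F]_m).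
    by apply/colP => a; rewrite !mxE mulr1.
  by rewrite -scalemxAr rowA; apply/colP => a; rewrite !mxE mulVf.
by rewrite -Ar mulKmx.
Qed.

Section CTLN.
Variables (R : realType) (n : nat) (G : rel 'I_n) (eps delta : R).

Definition ctln_coef (x y : 'I_n) : R :=
  if x == y then 1 else if G y x then 1 - eps else 1 + delta.

Lemma IminusW_ctln rho : IminusW (ctln_W G eps delta) rho = restr_mx ctln_coef rho.
Proof.
apply/matrixP => a b; rewrite /IminusW /principal_sub !mxE /ctln_coef.
by rewrite (inj_eq enum_val_inj); case: (a == b) => /=; [|case: (G _ _)]; ring.
Qed.

Lemma ctln_rowsum (tau : {set 'I_n}) i : simple_digraph G -> i \in tau ->
  \sum_(x in tau) ctln_coef i x =
  #|tau|%:R * (1 + delta) - delta - (eps + delta) * (indeg_in G tau i)%:R.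
Proof.
move=> simpleG itau.
have coefE x : ctln_coef i x =
    (1 + delta) - delta * (x == i)%:R - (eps + delta) * (G x i)%:R.
  rewrite /ctln_coef eq_sym; case: eqP => [->|_].
    by rewrite (negbTE (simpleG i)) /=; ring.
  by case: (G x i) => /=; ring.
under eq_bigr do rewrite coefE.
rewrite !sumrB sumr_const -!mulr_sumr.
have -> : \sum_(x in tau) ((x == i)%:R : R) = 1.
  by rewrite (bigD1 i) //= eqxx big1 ?addr0 // => x /andP [_ /negbTE ->].
have -> : \sum_(x in tau) ((G x i)%:R : R) = (indeg_in G tau i)%:R.
  rewrite /indeg_in -sum1_card natr_sum big_mkcond [RHS]big_mkcond.
  by apply: eq_bigr => x _; rewrite inE; case: (x \in tau); case: (G x i).
rewrite -mulr_natl mulr1; ring.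
Qed.

Lemma ctln_rowsum_gt0 (tau : {set 'I_n}) i : eps <= 1 -> 0 <= delta -> i \in tau ->
  0 < \sum_(x in tau) ctln_coef i x.
Proof.
move=> eps_le1 delta_ge0 itau; rewrite (bigD1 i) //= {1}/ctln_coef eqxx.
apply: (lt_le_trans ltr01); rewrite lerDl; apply: sumr_ge0 => x _.
by rewrite /ctln_coef; case: eqP => _; [|case: (G _ _)]; lra.
Qed.

Lemma ctln_coef_simply_added sigma tau omega :
  simply_added_split G sigma tau omega ->
  {in sigma :\: tau, forall y, exists c, {in tau, forall x, ctln_coef x y = c}}.
Proof.
move=> [-> _ _ _ simply_added] y; rewrite in_setD in_setU => /andP [ynt].
rewrite (negbTE ynt) /= => /simply_added [yto | ynto].
  exists (1 - eps) => x xt; rewrite /ctln_coef yto //.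
  by case: eqP => // xy; rewrite -xy xt in ynt.
exists (1 + delta) => x xt; rewrite /ctln_coef (negbTE (ynto x xt)).
by case: eqP => // xy; rewrite -xy xt in ynt.
Qed.

End CTLN.

Lemma legal_params_eps_lt1 (R : realType) (eps delta : R) :
  legal_params eps delta -> eps < 1.
Proof.
move=> [delta_gt0 [_ eps_lt]]; apply: (lt_trans eps_lt).
by rewrite ltr_pdivrMr ?mul1r; lra.
Qed.

Theorem corollary1 (R : realType) (n : nat) (G : rel 'I_n)
    (eps delta theta : R) (sigma tau omega : {set 'I_n}) :
  simple_digraph G ->
  legal_params eps delta ->
  0 < theta ->
  ctln_nondegenerate (ctln_W G eps delta) theta ->
  simply_added_split G sigma tau omega ->
  uniform_indegree G tau ->
  ~ stable_motif (ctln_W G eps delta) theta tau ->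
  ~ stable_motif (ctln_W G eps delta) theta sigma.
Proof.
move=> simpleG legal theta_gt0 nondeg split_sa [d indegE] tau_unstable [_ sigma_eig].
apply: tau_unstable.
have [sigmaE _ tau_neq0 _ _] := split_sa.
have [x0 x0tau] := set0Pn _ tau_neq0.
set r := #|tau|%:R * (1 + delta) - delta - (eps + delta) * d%:R.
have rowE : {in tau, forall x, \sum_(y in tau) ctln_coef G eps delta x y = r}.
  by move=> x xtau; rewrite ctln_rowsum // indegE.
have r_gt0 : 0 < r.
  rewrite -(rowE x0) // ctln_rowsum_gt0 ?ltW ?(legal_params_eps_lt1 legal) //.
  by case: legal.
split.
  have tau_unit : restr_mx (ctln_coef G eps delta) tau \in unitmx.
    by rewrite -IminusW_ctln unitmxE unitfE; have [] := nondeg tau.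
  move=> a; rewrite IminusW_ctln (invmx_const_rowsum tau_unit (lt0r_neq0 r_gt0)).
    by rewrite !mxE mulr_gt0 ?invr_gt0.
  exact: restr_mx_const_rowsum.
move=> lam; rewrite IminusW_ctln map_restr_mx => tau_eig.
have [-> // | lam_neq_r] := eqVneq lam (r%:C)%C.
apply: sigma_eig; rewrite IminusW_ctln map_restr_mx.
apply: eigenvalue_restr_mx_extend lam_neq_r tau_eig.
- by rewrite sigmaE subsetUl.
- by move=> x xtau; rewrite -(rowE x xtau) (rmorph_sum (real_complex R)).
- move=> y /(ctln_coef_simply_added eps delta split_sa) [c colE].
  by exists (c%:C)%C => x xtau; rewrite colE.
Qed.
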